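(* Let $\mathcal{A}$ be the algebra associated to an $\mathbb{H}_{2n+1}$-structure on $\mathbb{P}V$, let $\hat o\in V$ represent a point $o$ of the open orbit, and let $ev:\mathcal{A}\to V$, $a\mapsto a\hat o$. Then $\ker(ev)\cap C(\mathcal{A})=0$, where $C(\mathcal{A})$ is the center of $\mathcal{A}$.
   Context: Work over $\mathbb{C}$, $n\ge1$, $V\cong\mathbb{C}^{2n+2}$. The Heisenberg group $\mathbb{H}_{2n+1}$ is $\mathbb{W}\times\mathbb{C}$ ($\mathbb{W}$ a $2n$-dimensional space with non-degenerate skew form $\omega$) with law $(w_1,t_1)(w_2,t_2)=(w_1+w_2,t_1+t_2+\tfrac12\omega(w_1,w_2))$. An $\mathbb{H}_{2n+1}$-structure on $\mathbb{P}V$ is an effective algebraic action with a dense open orbit. Regard $\mathbb{H}_{2n+1}\subset\mathbb{P}\mathrm{GL}(V)$; with $\pi:\mathrm{GL}(V)\to\mathbb{P}\mathrm{GL}(V)$ the projection, the associated algebra $\mathcal{A}$ is the unital associative subalgebra of $\mathrm{End}(V)$ generated by $\pi^{-1}(\mathbb{H}_{2n+1})$. *)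

(* The ground field C is R[i] = complex R for R : realType,
   i.e. the field of complex numbers (a realType is a complete archimedean
   ordered field, i.e. the real numbers). *)
From HB Require Import structures.
From mathcomp Require Import all_boot all_order all_algebra.
From mathcomp Require Import reals.
From mathcomp Require Import complex.
From mathcomp Require Import mpoly.

Set Implicit Arguments.
Unset Strict Implicit.
Unset Printing Implicit Defensive.

Import Order.TTheory GRing.Theory Num.Theory.
Local Open Scope ring_scope.

Section HeisenbergStructure.

Variable R : realType.
Local Notation C := (R[i]).
Variable n : nat.

(* dim V = 2n+2, dim W = 2n.  Vectors of V are column vectors, End(V) is
   the algebra of square matrices acting on the left. *)
Local Notation N := (n.*2.+2).
Local Notation V := ('cV[C]_N).
Local Notation W := ('rV[C]_(n.*2)).

Definition skew_form (w1 w2 : W) (Om : 'M[C]_(n.*2)) : C :=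
  (w1 *m Om *m w2^T) 0 0.

Definition nondeg_skew (Om : 'M[C]_(n.*2)) : Prop :=
  Om^T = - Om /\ Om \in unitmx.

Definition heis_mul (Om : 'M[C]_(n.*2)) (g1 g2 : W * C) : W * C :=
  (g1.1 + g2.1, g1.2 + g2.2 + 2^-1 * skew_form g1.1 g2.1 Om).

Definition heis_one : W * C := (0, 0).

Definition hcoord (g : W * C) (i : 'I_(n.*2 + 1)) : C :=
  match split i with inl j => g.1 0 j | inr _ => g.2 end.

Definition vcoord (v : V) (i : 'I_N) : C := v i 0.

Definition poly_mx_eval (F : 'I_N -> 'I_N -> {mpoly C[n.*2 + 1]}) (g : W * C)
  : 'M[C]_N := \matrix_(i, j) (F i j).@[hcoord g].

(* rho : H -> GL(V) chooses, for every g in H, a lift rho g in GL(V) of the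
   image of g in PGL(V) = Aut(PV). *)
Definition heis_structure (Om : 'M[C]_(n.*2)) (rho : W * C -> 'M[C]_N) : Prop :=
  (forall g, rho g \in unitmx) /\
  (* the induced map H -> PGL(V) is a group homomorphism *)
  (forall g1 g2, exists2 c : C, c != 0 &
      rho (heis_mul Om g1 g2) = c *: (rho g1 *m rho g2)) /\
  (* effectiveness: only the identity acts trivially on PV *)
  (forall g, (exists c : C, rho g = c%:M) -> g = heis_one) /\
  (* algebraicity: H -> PGL(V) subset P(End V) is a morphism of varieties,
     i.e. locally given by polynomial matrices *)
  (forall g0, exists F : 'I_N -> 'I_N -> {mpoly C[n.*2 + 1]},
      poly_mx_eval F g0 != 0 /\
      forall g, poly_mx_eval F g != 0 ->
        exists2 c : C, c != 0 & poly_mx_eval F g = c *: rho g).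

(* Zariski topology on PV, described on the cone of nonzero vectors:
   a set X of points of PV (given as a predicate on nonzero vectors, stable
   under nonzero scalars) is closed iff it is the zero locus of a family of
   homogeneous polynomials. *)
Definition homog_poly (p : {mpoly C[N]}) : Prop :=
  exists d : nat, p \is @ishomog1 N C d mdeg.

Definition zariski_closed (X : V -> Prop) : Prop :=
  exists S : {mpoly C[N]} -> Prop,
    (forall p, S p -> homog_poly p) /\
    (forall v : V, v != 0 -> (X v <-> forall p, S p -> p.@[vcoord v] = 0)).

(* The orbit of the point [o_hat] of PV, as a set of nonzero vectors. *)
Definition orbit_cone (rho : W * C -> 'M[C]_N) (o_hat : V) (v : V) : Prop :=
  exists g, exists2 c : C, c != 0 & v = c *: (rho g *m o_hat).

Definition dense_open_orbit (rho : W * C -> 'M[C]_N) (o_hat : V) : Prop :=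
  o_hat != 0 /\
  zariski_closed (fun v => ~ orbit_cone rho o_hat v) /\
  (forall X, zariski_closed X ->
     (forall v, v != 0 -> orbit_cone rho o_hat v -> X v) ->
     forall v, v != 0 -> X v).

(* pi^{-1}(H): all invertible matrices whose class lies in the image of H. *)
Definition preimage_H (rho : W * C -> 'M[C]_N) (M : 'M[C]_N) : Prop :=
  exists g, exists2 c : C, c != 0 & M = c *: rho g.

Inductive gen_alg (S : 'M[C]_N -> Prop) : 'M[C]_N -> Prop :=
  | ga_gen M : S M -> gen_alg S M
  | ga_one : gen_alg S 1
  | ga_add M1 M2 : gen_alg S M1 -> gen_alg S M2 -> gen_alg S (M1 + M2)
  | ga_scale (c : C) M : gen_alg S M -> gen_alg S (c *: M)
  | ga_mul M1 M2 : gen_alg S M1 -> gen_alg S M2 -> gen_alg S (M1 *m M2).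

Definition assoc_alg (rho : W * C -> 'M[C]_N) : 'M[C]_N -> Prop :=
  gen_alg (preimage_H rho).

Definition center_alg (A : 'M[C]_N -> Prop) (a : 'M[C]_N) : Prop :=
  A a /\ forall b, A b -> a *m b = b *m a.

End HeisenbergStructure.

From HB Require Import structures.
From mathcomp Require Import all_boot all_order all_algebra.
From mathcomp Require Import reals complex mpoly.

(* A central element a of the algebra commutes with every rho g, so a o = 0
   gives a (rho g o) = rho g (a o) = 0: a kills the whole orbit cone.  The
   kernel of a matrix is cut out by the linear forms given by its rows, hence
   is Zariski closed; as it contains the dense orbit, it is everything, and
   a = 0. *)

Set Implicit Arguments.
Unset Strict Implicit.
Unset Printing Implicit Defensive.

Import GRing.Theory.
Local Open Scope ring_scope.

Lemma mx_annihilator_eq0 (K : nzRingType) m k (A : 'M[K]_(m, k)) :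
  (forall v : 'cV[K]_k, v != 0 -> A *m v = 0) -> A = 0.
Proof.
move=> Akill; apply/matrixP => i j.
have delta_neq0 : delta_mx j 0 != 0 :> 'cV[K]_k.
  by apply/eqP => /matrixP/(_ j 0); rewrite !mxE !eqxx; apply/eqP/oner_neq0.
by have /matrixP/(_ i 0) := Akill _ delta_neq0; rewrite -colE !mxE.
Qed.

Section CentralKernel.

Variable R : realType.
Variable n : nat.
Local Notation C := (R[i]).
Local Notation N := (n.*2.+2).

Definition linear_mpoly (r : 'rV[C]_N) : {mpoly C[N]} := \sum_k r 0 k *: 'X_k.

Lemma linear_mpoly_homog (r : 'rV[C]_N) : homog_poly (linear_mpoly r).
Proof.
exists 1%N; apply: rpred_sum => k _; apply: rpredZ.
by rewrite dhomogX; apply/eqP; apply: mdeg1.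
Qed.

Lemma meval_linear_mpoly (r : 'rV[C]_N) (v : 'cV[C]_N) :
  (linear_mpoly r).@[vcoord v] = (r *m v) 0 0.
Proof.
rewrite /linear_mpoly raddf_sum mxE; apply: eq_bigr => k _.
by rewrite /= mevalZ mevalXU.
Qed.

Lemma zariski_closed_kernel m (A : 'M[C]_(m, N)) :
  zariski_closed (fun v => A *m v = 0).
Proof.
exists (fun p => exists i, p = linear_mpoly (row i A)); split.
  by move=> _ [i ->]; apply: linear_mpoly_homog.
move=> v _; split.
  by move=> Av0 _ [i ->]; rewrite meval_linear_mpoly -row_mul Av0 row0 mxE.
move=> rows0; apply/matrixP => i j; rewrite [j]ord1 [RHS]mxE.
have := rows0 _ (ex_intro _ i erefl).
by rewrite meval_linear_mpoly -row_mul [LHS]mxE.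
Qed.

Lemma dense_orbit_annihilator_eq0 (rho : 'rV[C]_(n.*2) * C -> 'M[C]_N)
    (o_hat : 'cV[C]_N) m (A : 'M[C]_(m, N)) :
  dense_open_orbit rho o_hat ->
  (forall v, orbit_cone rho o_hat v -> A *m v = 0) -> A = 0.
Proof.
move=> [_ [_ dense]] Aorbit; apply: mx_annihilator_eq0.
exact: dense (zariski_closed_kernel A) (fun v _ => Aorbit v).
Qed.

Lemma assoc_alg_rho (rho : 'rV[C]_(n.*2) * C -> 'M[C]_N) g :
  assoc_alg rho (rho g).
Proof. by apply: ga_gen; exists g; exists 1; rewrite ?oner_eq0 ?scale1r. Qed.

Lemma central_annihilator_orbit (rho : 'rV[C]_(n.*2) * C -> 'M[C]_N)
    (o_hat : 'cV[C]_N) (a : 'M[C]_N) :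
  center_alg (assoc_alg rho) a -> a *m o_hat = 0 ->
  forall v, orbit_cone rho o_hat v -> a *m v = 0.
Proof.
move=> [_ a_central] ao0 _ [g [c _ ->]].
by rewrite -scalemxAr mulmxA (a_central _ (assoc_alg_rho rho g)) -mulmxA ao0 mulmx0 scaler0.
Qed.

End CentralKernel.

Theorem lemma3p2 (R : realType) (n : nat) (Om : 'M[R[i]]_(n.*2))
    (rho : 'rV[R[i]]_(n.*2) * R[i] -> 'M[R[i]]_(n.*2.+2))
    (o_hat : 'cV[R[i]]_(n.*2.+2)) :
  (1 <= n)%N ->
  nondeg_skew Om ->
  heis_structure Om rho ->
  dense_open_orbit rho o_hat ->
  forall a : 'M[R[i]]_(n.*2.+2),
    center_alg (assoc_alg rho) a -> a *m o_hat = 0 -> a = 0.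
Proof.
move=> _ _ _ orbit_dense a a_central ao0.
apply: dense_orbit_annihilator_eq0 orbit_dense _.
exact: central_annihilator_orbit a_central ao0.
Qed.
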